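(* Let $\mathcal I$ be an admissible ideal on $\mathbb N$. Then $\mathcal A\not\subseteq\mathfrak N^{\mathcal I}$: there is an Arbault set which does not belong to $\mathfrak N^{\mathcal I}$.
   Context: $\mathbb T=\mathbb R/\mathbb Z$ identified with $[0,1]$ (0 and 1 identified); $\|x\|$ is the distance from $x$ to the nearest integer. An ideal $\mathcal I$ on $\mathbb N$ is a nonempty family of subsets of $\mathbb N$ closed under finite unions and subsets with $\mathbb N\notin\mathcal I$; admissible means all singletons belong to it. $\mathcal A$: Arbault sets, i.e. sets $X\subseteq[0,1]$ with an increasing sequence of naturals $(a_n)$ such that $\|a_nx\|\to0$ for all $x\in X$. $\mathfrak N^{\mathcal I}$: the family of sets $X\subseteq[0,1]$ for which there exist an increasing sequence of naturals $(a_n)$ and a decreasing sequence of positive reals $(r_n)$ with $\sum_n r_n=\infty$, such that every $A\subseteq\mathbb N$ with $\sum_{n\in A}r_n<\infty$ belongs to $\mathcal I$, and such that $\sum_n r_n\|a_nx\|<\infty$ for all $x\in X$. *)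

From Stdlib Require Import Reals ClassicalDescription.
From Coquelicot Require Import Coquelicot.
Open Scope R_scope.

(* ||x|| : distance from x to the nearest integer.
   Int_part x is floor x, so x - Int_part x is the fractional part in [0,1). *)
Definition frac_part (x : R) : R := x - IZR (Int_part x).
Definition dist_int (x : R) : R := Rmin (frac_part x) (1 - frac_part x).

Definition nsubset (A B : nat -> Prop) : Prop := forall n, A n -> B n.

Definition is_ideal (I : (nat -> Prop) -> Prop) : Prop :=
  (exists A, I A) /\
  (forall A B, I A -> I B -> I (fun n => A n \/ B n)) /\
  (forall A B, I A -> nsubset B A -> I B) /\
  ~ I (fun _ => True).

Definition admissible_ideal (I : (nat -> Prop) -> Prop) : Prop :=
  is_ideal I /\ forall k : nat, I (fun n => n = k).

Definition strictly_increasing (a : nat -> nat) : Prop :=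
  forall n, (a n < a (S n))%nat.

(* Sets X ⊆ [0,1] (the torus identified with [0,1]). *)
Definition in_unit_interval (X : R -> Prop) : Prop :=
  forall x, X x -> 0 <= x <= 1.

Definition Arbault (X : R -> Prop) : Prop :=
  in_unit_interval X /\
  exists a : nat -> nat, strictly_increasing a /\
    forall x, X x -> is_lim_seq (fun n => dist_int (INR (a n) * x)) 0.

Definition restrict (A : nat -> Prop) (r : nat -> R) (n : nat) : R :=
  if excluded_middle_informative (A n) then r n else 0.

Definition in_N_I (I : (nat -> Prop) -> Prop) (X : R -> Prop) : Prop :=
  in_unit_interval X /\
  exists (a : nat -> nat) (r : nat -> R),
    strictly_increasing a /\
    (forall n, 0 < r n) /\
    (forall n, r (S n) <= r n) /\
    ~ ex_series r /\
    (forall A : nat -> Prop, ex_series (restrict A r) -> I A) /\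
    (forall x, X x -> ex_series (fun n => r n * dist_int (INR (a n) * x))).

(* The Arbault set X = {x in [0,1] : ||2^(2^k) x|| -> 0} works for every ideal: neither the
   ideal nor the monotonicity of (r_n) plays a role, since no increasing (a_n) and positive (r_n)
   with sum r_n = oo satisfy sum r_n ||a_n x|| < oo on all of X.

   Suppose they do. As X contains every 1/2^V and ||a_n / 2^(V+1)|| >= 1/2 when 2^V exactly
   divides a_n, the weight r_n carried by the n with 2^V | a_n is still infinite, for every V.
   We build x = sum_(q in S) 2^-q in stages. At stage i, with T = 2^i, a finite block of indices
   carrying weight 2^(T+2) among those with 2^(lo T) | a_n is chosen, and the digits at the
   multiples of T above lo T are fixed greedily from the top down: the digit at (m+1)T can be set
   so that the indices with 2-adic valuation in [mT, (m+1)T), for which ||a_n 2^-(m+1)T|| >= 2^-T,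
   keep at least a 2^-(T+1) share of their weight, and lower digits cannot disturb them. Later
   digits lie beyond a level lo' with sum r_n a_n <= 2^lo' on the block, so they cost at most 1:
   each block contributes at least 1 and the series diverges at x. From stage i on every digit is
   a multiple of 2^i, so the first digit after position 2^k is far away and ||2^(2^k) x|| -> 0. *)

From Pilot Require Import Defs.
From Stdlib Require Import Reals ClassicalDescription.
From Coquelicot Require Import Coquelicot.
From Stdlib Require Import ClassicalEpsilon Lia Lra ZArith Arith.
Open Scope R_scope.

(** * Finite sums *)

Lemma sum_n_m_Rplus (a b : nat -> R) (n m : nat) :
  sum_n_m (fun k => a k + b k) n m = sum_n_m a n m + sum_n_m b n m.
Proof. exact (sum_n_m_plus a b n m). Qed.

Lemma sum_n_m_Rmult_l (c : R) (a : nat -> R) (n m : nat) :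
  sum_n_m (fun k => c * a k) n m = c * sum_n_m a n m.
Proof. exact (sum_n_m_mult_l c a n m). Qed.

Lemma sum_n_m_ge0 (a : nat -> R) (n m : nat) :
  (forall k, 0 <= a k) -> 0 <= sum_n_m a n m.
Proof.
  intros Ha. apply Rle_trans with (sum_n_m (fun _ => 0) n m).
  - rewrite sum_n_m_const. lra.
  - now apply sum_n_m_le.
Qed.

Lemma sum_n_Chasles (a : nat -> R) (N M : nat) :
  (N <= M)%nat -> sum_n a M = sum_n a N + sum_n_m a (S N) M.
Proof. intros H. exact (sum_n_m_Chasles a 0 N M ltac:(lia) H). Qed.

Lemma sum_n_mono (a : nat -> R) (N M : nat) :
  (forall k, 0 <= a k) -> (N <= M)%nat -> sum_n a N <= sum_n a M.
Proof.
  intros Ha H. rewrite (sum_n_Chasles a N M H). pose proof (sum_n_m_ge0 a (S N) M Ha). lra.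
Qed.

Lemma sum_n_m_unbounded (u : nat -> R) :
  (forall n, 0 <= u n) -> ~ ex_series u ->
  forall A M, exists B, (A <= B)%nat /\ M <= sum_n_m u A B.
Proof.
  intros Hu Hdiv A M. apply Classical_Prop.NNPP. intros Hbound. apply Hdiv.
  assert (Htail : forall B, (A <= B)%nat -> sum_n_m u A B < M).
  { intros B HB. apply Rnot_le_lt. intros HM. apply Hbound. now exists B. }
  destruct (ex_finite_lim_seq_incr (sum_n u) (sum_n u A + M)) as [l Hl].
  - intros n. apply sum_n_mono; auto.
  - intros N. pose proof (Hu A). destruct (Nat.le_gt_cases A N) as [HN | HN].
    + rewrite (sum_n_Chasles u A N HN).
      pose proof (Htail N HN) as HAN. rewrite (sum_Sn_m u A N HN) in HAN.
      change (u A + sum_n_m u (S A) N < M) in HAN. lra.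
    + pose proof (sum_n_mono u N A Hu ltac:(lia)).
      pose proof (Htail A (le_n A)) as HAA. rewrite sum_n_n in HAA. lra.
  - now exists l.
Qed.

Lemma not_ex_series_of_blocks (u : nat -> R) :
  (forall N, exists A B, (N <= A)%nat /\ 1 <= sum_n_m u A B) -> ~ ex_series u.
Proof.
  intros Hblocks Hconv. destruct (Cauchy_ex_series u Hconv (mkposreal 1 Rlt_0_1)) as [N HN].
  destruct (Hblocks N) as [A [B [HA Hsum]]]. simpl in HN.
  destruct (Nat.le_gt_cases A B) as [HAB | HAB].
  - assert (HNB : (N <= B)%nat) by lia. specialize (HN A B HA HNB).
    change (norm (sum_n_m u A B)) with (Rabs (sum_n_m u A B)) in HN.
    pose proof (Rle_abs (sum_n_m u A B)). lra.
  - rewrite sum_n_m_zero in Hsum by exact HAB. change (1 <= 0) in Hsum. lra.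
Qed.

(** * Distance to the nearest integer *)

Lemma dist_int_le_Rabs (x : R) (k : Z) : dist_int x <= Rabs (x - IZR k).
Proof.
  unfold dist_int, Defs.frac_part. destruct (base_Int_part x) as [Hlo Hhi].
  destruct (Z.le_gt_cases k (Int_part x)) as [Hk | Hk].
  - apply IZR_le in Hk. rewrite Rabs_right by lra. eapply Rle_trans; [apply Rmin_l | lra].
  - assert (Hk1 : (Int_part x + 1 <= k)%Z) by lia. apply IZR_le in Hk1. rewrite plus_IZR in Hk1.
    rewrite Rabs_left1 by lra. eapply Rle_trans; [apply Rmin_r | lra].
Qed.

Lemma dist_int_attained (x : R) : exists k : Z, dist_int x = Rabs (x - IZR k).
Proof.
  unfold dist_int, Defs.frac_part. destruct (base_Int_part x) as [Hlo Hhi].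
  destruct (Rle_dec (x - IZR (Int_part x)) (1 - (x - IZR (Int_part x)))).
  - exists (Int_part x). rewrite Rmin_left, Rabs_right; lra.
  - exists (Int_part x + 1)%Z. rewrite Rmin_right, plus_IZR, Rabs_left1; lra.
Qed.

Lemma dist_int_ge0 (x : R) : 0 <= dist_int x.
Proof. destruct (dist_int_attained x) as [k ->]. apply Rabs_pos. Qed.

Lemma dist_int_add_IZR (x : R) (k : Z) : dist_int (x + IZR k) = dist_int x.
Proof.
  apply Rle_antisym.
  - destruct (dist_int_attained x) as [j ->].
    apply Rle_trans with (1 := dist_int_le_Rabs _ (j + k)).
    rewrite plus_IZR. right. f_equal. ring.
  - destruct (dist_int_attained (x + IZR k)) as [j ->].
    apply Rle_trans with (1 := dist_int_le_Rabs _ (j - k)).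
    rewrite minus_IZR. right. f_equal. ring.
Qed.

Lemma dist_int_INR (n : nat) : dist_int (INR n) = 0.
Proof.
  apply Rle_antisym; [| apply dist_int_ge0].
  apply Rle_trans with (1 := dist_int_le_Rabs _ (Z.of_nat n)).
  rewrite <- INR_IZR_INZ, Rminus_diag, Rabs_R0. lra.
Qed.

Lemma dist_int_sub (x y : R) : dist_int (x - y) <= dist_int x + dist_int y.
Proof.
  destruct (dist_int_attained x) as [j ->]. destruct (dist_int_attained y) as [l ->].
  apply Rle_trans with (1 := dist_int_le_Rabs _ (j - l)).
  rewrite minus_IZR. replace (x - y - (IZR j - IZR l)) with ((x - IZR j) - (y - IZR l)) by ring.
  unfold Rminus at 1. rewrite <- (Rabs_Ropp (y - IZR l)). apply Rabs_triang.
Qed.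

Lemma dist_int_le_add_Rabs (x y : R) : dist_int y <= dist_int x + Rabs (y - x).
Proof.
  destruct (dist_int_attained x) as [j ->].
  apply Rle_trans with (1 := dist_int_le_Rabs _ j).
  replace (y - IZR j) with ((x - IZR j) + (y - x)) by ring. apply Rabs_triang.
Qed.

Lemma pow2_gt0 (n : nat) : 0 < 2 ^ n.
Proof. apply pow_lt. lra. Qed.

Lemma mod_pow2_le (c p q : nat) : (p <= q)%nat -> (c mod 2 ^ q = 0)%nat -> (c mod 2 ^ p = 0)%nat.
Proof.
  intros Hpq Hq. apply Nat.Div0.mod_divides in Hq as [k ->].
  apply Nat.Div0.mod_divides. exists (2 ^ (q - p) * k)%nat.
  rewrite Nat.mul_assoc, <- Nat.pow_add_r. f_equal. f_equal. lia.
Qed.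

Lemma dist_int_dyadic_ge (c p q : nat) :
  (p <= q)%nat -> (c mod 2 ^ p = 0)%nat -> (c mod 2 ^ q <> 0)%nat ->
  / 2 ^ (q - p) <= dist_int (INR c / 2 ^ q).
Proof.
  intros Hpq Hp Hq. set (T := (q - p)%nat).
  apply Nat.Div0.mod_divides in Hp as [c' Hc].
  assert (Hc' : (c' mod 2 ^ T <> 0)%nat).
  { intros E. apply Hq. apply Nat.Div0.mod_divides in E as [e ->].
    apply Nat.Div0.mod_divides. exists e. rewrite Hc, Nat.mul_assoc, <- Nat.pow_add_r.
    f_equal. f_equal. unfold T. lia. }
  replace (INR c / 2 ^ q) with (INR c' / 2 ^ T).
  2:{ rewrite Hc, mult_INR, pow_INR. replace q with (p + T)%nat by (unfold T; lia).
      rewrite pow_add. replace (INR 2) with 2 by (simpl; lra). field. split; apply pow_nonzero; lra. }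
  destruct (dist_int_attained (INR c' / 2 ^ T)) as [k ->].
  set (z := (Z.of_nat c' - k * 2 ^ Z.of_nat T)%Z).
  pose proof (pow2_gt0 T) as HT.
  replace (INR c' / 2 ^ T - IZR k) with (IZR z / 2 ^ T).
  2:{ unfold z. rewrite minus_IZR, mult_IZR, <- INR_IZR_INZ, <- pow_IZR. field. lra. }
  assert (Hz : z <> 0%Z).
  { intros E. apply Hc'. apply Nat2Z.inj. rewrite Nat2Z.inj_mod, Nat2Z.inj_pow.
    replace (Z.of_nat c') with (k * 2 ^ Z.of_nat T)%Z by (unfold z in E; lia).
    apply Z_mod_mult. }
  assert (Hz1 : 1 <= Rabs (IZR z)).
  { rewrite <- abs_IZR. apply IZR_le. lia. }
  unfold Rdiv. rewrite Rabs_mult, (Rabs_right (/ 2 ^ T)) by (apply Rle_ge, Rlt_le, Rinv_0_lt_compat, HT).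
  rewrite <- (Rmult_1_l (/ 2 ^ T)) at 1.
  apply Rmult_le_compat_r; [apply Rlt_le, Rinv_0_lt_compat, HT | exact Hz1].
Qed.

(** * Dyadic numbers with prescribed binary digits *)

Definition digit (s : nat -> bool) (q : nat) : R := if s q then / 2 ^ q else 0.

Definition dyadic (s : nat -> bool) : R := Series (digit s).

Definition set_digit (s : nat -> bool) (q0 : nat) (e : bool) : nat -> bool :=
  fun q => if Nat.eqb q q0 then e else s q.

Lemma digit_ge0 (s : nat -> bool) (q : nat) : 0 <= digit s q.
Proof. unfold digit. destruct (s q); [apply Rlt_le, Rinv_0_lt_compat, pow2_gt0 | lra]. Qed.

Lemma digit_le (s : nat -> bool) (q : nat) : digit s q <= / 2 ^ q.
Proof. unfold digit. destruct (s q); [lra | apply Rlt_le, Rinv_0_lt_compat, pow2_gt0]. Qed.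

Lemma sum_inv_pow2 (a b : nat) : (a <= b)%nat ->
  sum_n_m (fun q => / 2 ^ q) (S a) b = / 2 ^ a - / 2 ^ b.
Proof.
  induction 1 as [| b Hab IH].
  - rewrite sum_n_m_zero by lia. change (0 = / 2 ^ a - / 2 ^ a). ring.
  - rewrite sum_n_Sm, IH by lia. change (/ 2 ^ a - / 2 ^ b + / 2 ^ S b = / 2 ^ a - / 2 ^ S b).
    simpl. field. split; apply pow_nonzero; lra.
Qed.

Lemma sum_digit_scaled_integer (s : nat -> bool) (Q : nat) :
  exists k : Z, 2 ^ Q * sum_n (digit s) Q = IZR k.
Proof.
  induction Q as [| Q [k Hk]].
  - rewrite sum_O. unfold digit. destruct (s 0%nat); [exists 1%Z | exists 0%Z]; simpl; field.
  - rewrite sum_Sn. change (plus ?x ?y) with (x + y). unfold digit at 2.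
    exists (2 * k + if s (S Q) then 1 else 0)%Z. rewrite plus_IZR, mult_IZR, <- Hk.
    destruct (s (S Q)); simpl; field; apply pow_nonzero; lra.
Qed.

Lemma sum_digit_agree (s t : nat -> bool) (Q H : nat) : (Q <= H)%nat ->
  (forall q, (Q < q <= H)%nat -> s q = t q) ->
  sum_n (digit s) H - sum_n (digit t) H = sum_n (digit s) Q - sum_n (digit t) Q.
Proof.
  intros HQ Hst. rewrite !(sum_n_Chasles _ Q H HQ).
  rewrite (sum_n_m_ext_loc (digit s) (digit t)); [ring |].
  intros q Hq. unfold digit. rewrite Hst by lia. reflexivity.
Qed.

Lemma dist_int_sum_digit_agree (c : nat) (s t : nat -> bool) (Q H : nat) :
  (c mod 2 ^ Q = 0)%nat -> (Q <= H)%nat -> (forall q, (Q < q <= H)%nat -> s q = t q) ->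
  dist_int (INR c * sum_n (digit s) H) = dist_int (INR c * sum_n (digit t) H).
Proof.
  intros Hc HQ Hst. apply Nat.Div0.mod_divides in Hc as [c' ->].
  destruct (sum_digit_scaled_integer s Q) as [ks Hks].
  destruct (sum_digit_scaled_integer t Q) as [kt Hkt].
  replace (INR (2 ^ Q * c') * sum_n (digit s) H)
    with (INR (2 ^ Q * c') * sum_n (digit t) H + IZR (Z.of_nat c' * (ks - kt))).
  - apply dist_int_add_IZR.
  - rewrite mult_IZR, minus_IZR, <- INR_IZR_INZ, <- Hks, <- Hkt, mult_INR, pow_INR.
    replace (INR 2) with 2 by (simpl; lra).
    pose proof (sum_digit_agree s t Q H HQ Hst). nra.
Qed.

Lemma sum_n_kronecker (q0 H : nat) (v : R) :
  sum_n (fun q => if Nat.eqb q q0 then v else 0) H = if Nat.leb q0 H then v else 0.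
Proof.
  induction H as [| H IH].
  - rewrite sum_O. destruct (Nat.eqb_spec 0 q0), (Nat.leb_spec q0 0); auto; lia.
  - rewrite sum_Sn, IH. change (plus ?x ?y) with (x + y).
    destruct (Nat.eqb_spec (S H) q0), (Nat.leb_spec q0 H), (Nat.leb_spec q0 (S H)); lra || lia.
Qed.

Lemma sum_digit_set_digit (s : nat -> bool) (q0 H : nat) : (q0 <= H)%nat ->
  sum_n (digit (set_digit s q0 true)) H - sum_n (digit (set_digit s q0 false)) H = / 2 ^ q0.
Proof.
  intros Hq0.
  rewrite (sum_n_ext _ (fun q => digit (set_digit s q0 false) q + if Nat.eqb q q0 then / 2 ^ q0 else 0)).
  - rewrite (sum_n_plus (G := R_AbelianMonoid)), sum_n_kronecker.
    apply Nat.leb_le in Hq0. rewrite Hq0. change (plus ?x ?y) with (x + y). ring.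
  - intros q. unfold digit, set_digit. destruct (Nat.eqb_spec q q0) as [-> |]; lra.
Qed.

Lemma dyadic_correct (s : nat -> bool) : is_lim_seq (sum_n (digit s)) (dyadic s).
Proof.
  apply (Series_correct (digit s)).
  apply (ex_series_le (V := R_CompleteNormedModule) _ (fun q => (/ 2) ^ q)).
  - intros q. change (norm (digit s q)) with (Rabs (digit s q)).
    rewrite Rabs_right by apply Rle_ge, digit_ge0. rewrite pow_inv. apply digit_le.
  - apply ex_series_geom. rewrite Rabs_right; lra.
Qed.

Lemma sum_digit_le_dyadic (s : nat -> bool) (Q : nat) : sum_n (digit s) Q <= dyadic s.
Proof.
  apply is_lim_seq_incr_compare; [apply dyadic_correct |].
  intros n. apply sum_n_mono; [apply digit_ge0 | lia].
Qed.

Lemma dyadic_le_sum_digit (s : nat -> bool) (Q : nat) :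
  dyadic s <= sum_n (digit s) Q + / 2 ^ Q.
Proof.
  assert (Hpartial : forall N, sum_n (digit s) N <= sum_n (digit s) Q + / 2 ^ Q).
  { intros N. pose proof (Rinv_0_lt_compat _ (pow2_gt0 Q)).
    destruct (Nat.le_gt_cases N Q) as [HN | HN].
    - pose proof (sum_n_mono (digit s) N Q (digit_ge0 s) HN). lra.
    - rewrite (sum_n_Chasles _ Q N ltac:(lia)).
      pose proof (sum_n_m_le _ _ (S Q) N (digit_le s)) as Hle.
      rewrite sum_inv_pow2 in Hle by lia. pose proof (Rinv_0_lt_compat _ (pow2_gt0 N)). lra. }
  apply (is_lim_seq_le _ _ _ _ Hpartial (dyadic_correct s) (is_lim_seq_const _)).
Qed.

Lemma sum_digit_gap (s : nat -> bool) (Q Q' : nat) : (Q <= Q')%nat ->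
  (forall q, (Q < q <= Q')%nat -> s q = false) -> sum_n (digit s) Q' = sum_n (digit s) Q.
Proof.
  intros HQ Hgap. rewrite (sum_n_Chasles _ Q Q' HQ).
  rewrite (sum_n_m_ext_loc _ (fun _ => 0)).
  - rewrite sum_n_m_const, Rmult_0_r, Rplus_0_r. reflexivity.
  - intros q Hq. unfold digit. rewrite Hgap by lia. reflexivity.
Qed.

Lemma dyadic_gap_bounds (s : nat -> bool) (Q Q' : nat) : (Q <= Q')%nat ->
  (forall q, (Q < q <= Q')%nat -> s q = false) ->
  sum_n (digit s) Q <= dyadic s <= sum_n (digit s) Q + / 2 ^ Q'.
Proof.
  intros HQ Hgap. split; [apply sum_digit_le_dyadic |].
  rewrite <- (sum_digit_gap s Q Q' HQ Hgap). apply dyadic_le_sum_digit.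
Qed.

Lemma dyadic_unit_interval (s : nat -> bool) : s 0%nat = false -> 0 <= dyadic s <= 1.
Proof.
  intros Hs0. pose proof (dyadic_gap_bounds s 0 0 (le_n 0) ltac:(lia)) as Hb.
  rewrite sum_O in Hb. unfold digit in Hb. rewrite Hs0 in Hb. simpl in Hb. lra.
Qed.

Lemma dist_int_pow2_dyadic (s : nat -> bool) (Q Q' : nat) : (Q <= Q')%nat ->
  (forall q, (Q < q <= Q')%nat -> s q = false) ->
  dist_int (2 ^ Q * dyadic s) <= / 2 ^ (Q' - Q).
Proof.
  intros HQ Hgap. destruct (sum_digit_scaled_integer s Q) as [k Hk].
  pose proof (dyadic_gap_bounds s Q Q' HQ Hgap) as Hb. pose proof (pow2_gt0 Q).
  apply Rle_trans with (1 := dist_int_le_Rabs _ k).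
  rewrite <- Hk, <- Rmult_minus_distr_l, Rabs_right by nra.
  replace (/ 2 ^ (Q' - Q)) with (2 ^ Q * / 2 ^ Q').
  - apply Rmult_le_compat_l; lra.
  - replace Q' with (Q + (Q' - Q))%nat at 1 by lia. rewrite pow_add.
    field. split; apply pow_nonzero; lra.
Qed.

(** * The Arbault set *)

Definition arbault_seq (k : nat) : nat := (2 ^ (2 ^ k))%nat.

Definition arbault_set (x : R) : Prop :=
  0 <= x <= 1 /\ is_lim_seq (fun k => dist_int (INR (arbault_seq k) * x)) 0.

Definition digits_eventually_divisible (s : nat -> bool) : Prop :=
  forall I, exists L, forall p, (L < p)%nat -> s p = true -> Nat.divide (2 ^ I) p.

Lemma arbault_seq_incr : strictly_increasing arbault_seq.
Proof. intros k. unfold arbault_seq. apply Nat.pow_lt_mono_r; [lia |]. apply Nat.pow_lt_mono_r; lia. Qed.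

Lemma exists_pow2_ge (M : R) (n0 : nat) : exists k, (n0 <= k)%nat /\ M <= 2 ^ k.
Proof.
  destruct (nfloor_ex (Rmax M 0) (Rmax_r _ _)) as [n Hn]. exists (n0 + n)%nat. split; [lia |].
  pose proof (Nat.pow_gt_lin_r 2 (n0 + n) ltac:(lia)) as Hlin.
  apply le_INR in Hlin. rewrite pow_INR, S_INR, plus_INR in Hlin.
  replace (INR 2) with 2 in Hlin by (simpl; lra).
  pose proof (Rmax_l M 0). pose proof (pos_INR n0). lra.
Qed.

Lemma divide_add_le (d a b : nat) :
  Nat.divide d a -> Nat.divide d b -> (a < b)%nat -> (a + d <= b)%nat.
Proof. intros [x ->] [y ->] Hab. assert (x < y)%nat by nia. nia. Qed.

Lemma inv_pow2_in_arbault_set (V : nat) : arbault_set (/ 2 ^ V).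
Proof.
  split.
  - pose proof (pow2_gt0 V). split; [apply Rlt_le, Rinv_0_lt_compat; lra |].
    rewrite <- Rinv_1. apply Rinv_le_contravar; [lra | apply pow_R1_Rle; lra].
  - apply (is_lim_seq_ext_loc (fun _ => 0)); [| apply is_lim_seq_const].
    exists V. intros k Hk. unfold arbault_seq.
    pose proof (Nat.pow_gt_lin_r 2 k ltac:(lia)).
    replace (INR (2 ^ 2 ^ k) * / 2 ^ V) with (INR (2 ^ (2 ^ k - V))).
    + now rewrite dist_int_INR.
    + rewrite !pow_INR. replace (INR 2) with 2 by (simpl; lra).
      replace (2 ^ k)%nat with (V + (2 ^ k - V))%nat at 2 by lia. rewrite pow_add.
      field. apply pow_nonzero. lra.
Qed.

Lemma dyadic_in_arbault_set (s : nat -> bool) :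
  s 0%nat = false -> digits_eventually_divisible s -> arbault_set (dyadic s).
Proof.
  intros Hs0 Hdiv. split; [now apply dyadic_unit_interval |].
  apply is_lim_seq_spec. intros eps.
  destruct (exists_pow2_ge (2 / eps) 0) as [I [_ HI]].
  destruct (Hdiv I) as [L HL].
  exists (L + I)%nat. intros k Hk. set (Q := (2 ^ k)%nat).
  assert (HkQ : (k < Q)%nat) by apply Nat.pow_gt_lin_r, Nat.lt_1_2.
  assert (HIQ : Nat.divide (2 ^ I) Q).
  { exists (2 ^ (k - I))%nat. unfold Q. rewrite <- Nat.pow_add_r. f_equal. lia. }
  assert (Hgap : forall q, (Q < q <= Q + I)%nat -> s q = false).
  { intros q Hq. destruct (s q) eqn:Hsq; [exfalso | reflexivity].
    pose proof (divide_add_le _ _ _ HIQ (HL q ltac:(lia) Hsq) ltac:(lia)).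
    pose proof (Nat.pow_gt_lin_r 2 I ltac:(lia)). lia. }
  pose proof (dist_int_pow2_dyadic s Q (Q + I) ltac:(lia) Hgap) as Hdist.
  replace (Q + I - Q)%nat with I in Hdist by lia.
  rewrite Rminus_0_r, Rabs_right by apply Rle_ge, dist_int_ge0.
  unfold arbault_seq. rewrite pow_INR. replace (INR 2) with 2 by (simpl; lra). fold Q.
  pose proof (pow2_gt0 I) as HI0. pose proof (cond_pos eps).
  apply Rle_lt_trans with (1 := Hdist).
  apply (Rmult_lt_reg_l (2 ^ I)); [lra |]. rewrite Rinv_r by lra.
  unfold Rdiv in HI. apply (Rmult_le_compat_r eps) in HI; [| lra].
  rewrite Rmult_assoc, Rinv_l in HI by lra. lra.
Qed.

(** * Greedy choice of digits *)

Definition valuation2_between (p q c : nat) : bool :=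
  Nat.eqb (c mod 2 ^ p) 0 && negb (Nat.eqb (c mod 2 ^ q) 0).

Lemma valuation2_between_empty (p c : nat) : valuation2_between p p c = false.
Proof. unfold valuation2_between. now destruct (Nat.eqb _ _). Qed.

Lemma mask_valuation2_split (p q q' c : nat) (v : R) : (p <= q <= q')%nat ->
  (if valuation2_between p q' c then v else 0) =
  (if valuation2_between p q c then v else 0) + (if valuation2_between q q' c then v else 0).
Proof.
  intros Hpq. unfold valuation2_between.
  destruct (Nat.eqb_spec (c mod 2 ^ q) 0) as [Hq | Hq];
  destruct (Nat.eqb_spec (c mod 2 ^ q') 0) as [Hq' | Hq']; simpl; try lra.
  - pose proof (mod_pow2_le c p q ltac:(lia) Hq) as Hp. apply Nat.eqb_eq in Hp.
    rewrite Hp. simpl. lra.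
  - pose proof (mod_pow2_le c q q' ltac:(lia) Hq'). contradiction.
Qed.

Lemma half_of_sum (a b c : R) : c <= a + b -> exists e : bool, c / 2 <= if e then a else b.
Proof.
  intros Hc. destruct (Rle_dec (c / 2) a); [now exists true |]. exists false. lra.
Qed.

Lemma sum_dist_int_perturb (c : nat -> nat) (w : nat -> R) (mask : nat -> bool) (A B : nat)
  (P x delta : R) : (forall n, 0 <= w n) -> P <= x <= P + delta ->
  sum_n_m (fun n => if mask n then w n * dist_int (INR (c n) * P) else 0) A B
    - delta * sum_n_m (fun n => w n * INR (c n)) A B
  <= sum_n_m (fun n => w n * dist_int (INR (c n) * x)) A B.
Proof.
  intros Hw Hx. rewrite <- sum_n_m_Rmult_l.
  enough (Hle : sum_n_m (fun n => if mask n then w n * dist_int (INR (c n) * P) else 0) A B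
               <= sum_n_m (fun n => w n * dist_int (INR (c n) * x) + delta * (w n * INR (c n))) A B)
    by (rewrite sum_n_m_Rplus in Hle; lra).
  apply sum_n_m_le. intros n. pose proof (Hw n). pose proof (pos_INR (c n)).
  assert (Hcost : 0 <= delta * (w n * INR (c n))) by (apply Rmult_le_pos; [lra | nra]).
  pose proof (Rmult_le_pos _ _ (Hw n) (dist_int_ge0 (INR (c n) * x))).
  destruct (mask n); [| lra].
  pose proof (dist_int_le_add_Rabs (INR (c n) * x) (INR (c n) * P)) as Hlip.
  rewrite <- Rmult_minus_distr_l, Rabs_mult, Rabs_right, Rabs_left1 in Hlip by lra.
  assert (Hshift : INR (c n) * - (P - x) <= INR (c n) * delta) by (apply Rmult_le_compat_l; lra).
  apply (Rmult_le_compat_l (w n)) in Hlip; [| exact (Hw n)]. nra.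
Qed.

Section GreedyDigits.

Variables (b : nat -> nat) (w : nat -> R) (A B H T : nat).
Hypothesis w_ge0 : forall n, 0 <= w n.

Definition band_sum (p q : nat) (f : nat -> R) : R :=
  sum_n_m (fun n => if valuation2_between p q (b n) then f n else 0) A B.

Definition payoff (s : nat -> bool) (n : nat) : R :=
  w n * dist_int (INR (b n) * sum_n (digit s) H).

Lemma band_sum_empty (p : nat) (f : nat -> R) : band_sum p p f = 0.
Proof.
  unfold band_sum. rewrite (sum_n_m_ext _ (fun _ => 0)).
  - rewrite sum_n_m_const. ring.
  - intros n. now rewrite valuation2_between_empty.
Qed.

Lemma band_sum_split (p q q' : nat) (f : nat -> R) : (p <= q <= q')%nat ->
  band_sum p q' f = band_sum p q f + band_sum q q' f.
Proof.
  intros Hpq. unfold band_sum. rewrite <- sum_n_m_Rplus.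
  apply sum_n_m_ext. intros n. now apply mask_valuation2_split.
Qed.

Lemma top_digit_reward (m : nat) (g : nat -> bool) : (S m * T <= H)%nat ->
  / 2 ^ T * band_sum (m * T) (S m * T) w <=
  band_sum (m * T) (S m * T) (payoff (set_digit g (S m * T) true)) +
  band_sum (m * T) (S m * T) (payoff (set_digit g (S m * T) false)).
Proof.
  intros HmH. unfold band_sum. rewrite <- sum_n_m_Rplus, <- sum_n_m_Rmult_l.
  apply sum_n_m_le. intros n.
  destruct (valuation2_between (m * T) (S m * T) (b n)) eqn:Hv; [| lra].
  apply andb_prop in Hv as [Hlow Hhigh].
  apply Nat.eqb_eq in Hlow. apply Bool.negb_true_iff, Nat.eqb_neq in Hhigh.
  pose proof (dist_int_dyadic_ge (b n) (m * T) (S m * T) ltac:(nia) Hlow Hhigh) as Hreward.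
  replace (S m * T - m * T)%nat with T in Hreward by lia.
  pose proof (dist_int_sub (INR (b n) * sum_n (digit (set_digit g (S m * T) true)) H)
                           (INR (b n) * sum_n (digit (set_digit g (S m * T) false)) H)) as Htri.
  rewrite <- Rmult_minus_distr_l, sum_digit_set_digit in Htri by exact HmH.
  unfold payoff. pose proof (w_ge0 n). nra.
Qed.

Lemma band_sum_payoff_agree (m q : nat) (s g : nat -> bool) : (m * T <= H)%nat ->
  (forall p, s p <> g p -> (p <= m * T)%nat) ->
  band_sum (m * T) q (payoff s) = band_sum (m * T) q (payoff g).
Proof.
  intros HmH Hsg. unfold band_sum. apply sum_n_m_ext. intros n.
  destruct (valuation2_between (m * T) q (b n)) eqn:Hv; [| reflexivity].
  apply andb_prop in Hv as [Hlow _]. apply Nat.eqb_eq in Hlow.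
  unfold payoff. f_equal. apply (dist_int_sum_digit_agree _ _ _ (m * T)); auto.
  intros p Hp. destruct (Bool.bool_dec (s p) (g p)) as [E | E]; [exact E |].
  specialize (Hsg p E). lia.
Qed.

(* Digits are fixed from the top down: the digit at (m+1)T secures its share from the indices of
   2-adic valuation in [mT, (m+1)T), and the digits chosen afterwards, all at positions <= mT,
   cannot change their payoff. *)
Lemma greedy_digits (m0 : nat) : (0 < T)%nat -> forall d g, ((m0 + d) * T <= H)%nat -> exists s,
  (forall q, s q <> g q -> Nat.divide T q /\ (m0 * T < q <= (m0 + d) * T)%nat) /\
  / 2 ^ S T * band_sum (m0 * T) ((m0 + d) * T) w <=
  band_sum (m0 * T) ((m0 + d) * T) (payoff s).
Proof.
  intros T_pos. induction d as [| d IH]; intros g Hd.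
  - exists g. split; [intros q Hq; congruence |].
    rewrite Nat.add_0_r, !band_sum_empty. lra.
  - set (m := (m0 + d)%nat). replace (m0 + S d)%nat with (S m) in * by (unfold m; lia).
    set (q0 := (S m * T)%nat).
    destruct (half_of_sum _ _ _ (top_digit_reward m g Hd)) as [e He].
    set (g' := set_digit g q0 e).
    assert (Htop : / 2 ^ T * band_sum (m * T) q0 w / 2 <= band_sum (m * T) q0 (payoff g')).
    { unfold g'. destruct e; exact He. }
    destruct (IH g' ltac:(unfold q0 in *; nia)) as [s [Hchg Hlow]]. fold m in Hchg, Hlow.
    exists s. split.
    + intros q Hq. destruct (Bool.bool_dec (s q) (g' q)) as [E | E].
      * unfold g', set_digit in E. destruct (Nat.eqb_spec q q0) as [-> | ]; [| congruence].
        split; [now exists (S m) | unfold q0, m; nia].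
      * destruct (Hchg q E) as [Hdiv Hrange]. split; [exact Hdiv | nia].
    + rewrite !(band_sum_split (m0 * T) (m * T) (S m * T)) by (unfold m; nia). fold q0.
      rewrite (band_sum_payoff_agree m q0 s g') by (try (unfold q0 in *; nia);
        intros p Hp; destruct (Hchg p Hp); lia).
      replace (/ 2 ^ S T) with (/ 2 ^ T / 2) in * by (simpl; field; apply pow_nonzero; lra).
      lra.
Qed.

Lemma band_payoff_le_dyadic (p q lo' : nat) (s t : nat -> bool) : (H <= lo')%nat ->
  (forall k, (H < k)%nat -> s k = false) -> (forall k, (k <= lo')%nat -> t k = s k) ->
  band_sum p q (payoff s) - / 2 ^ lo' * sum_n_m (fun n => w n * INR (b n)) A B
  <= sum_n_m (fun n => w n * dist_int (INR (b n) * dyadic t)) A B.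
Proof.
  intros Hlo' Hs Ht.
  assert (Hpartial : sum_n (digit t) H = sum_n (digit s) H).
  { apply sum_n_ext_loc. intros k Hk. unfold digit. rewrite Ht by lia. reflexivity. }
  assert (Hx : sum_n (digit s) H <= dyadic t <= sum_n (digit s) H + / 2 ^ lo').
  { rewrite <- Hpartial. apply dyadic_gap_bounds; [exact Hlo' |].
    intros k Hk. rewrite Ht by lia. apply Hs. lia. }
  exact (sum_dist_int_perturb b w (fun n => valuation2_between p q (b n)) A B _ _ _ w_ge0 Hx).
Qed.

End GreedyDigits.

(** * The construction *)

Lemma strictly_increasing_le (a : nat -> nat) :
  strictly_increasing a -> forall n m, (n <= m)%nat -> (a n <= a m)%nat.
Proof. intros Ha n m Hnm. induction Hnm as [| m _ IH]; [lia | specialize (Ha m); lia]. Qed.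

Lemma strictly_increasing_ge_id (a : nat -> nat) : strictly_increasing a -> forall n, (n <= a n)%nat.
Proof. intros Ha n. induction n as [| n IH]; [lia | specialize (Ha n); lia]. Qed.

Lemma dependent_choice_nat {X : Type} (P : X -> Prop) (R : nat -> X -> X -> Prop) (x0 : X) :
  P x0 -> (forall i x, P x -> exists y, P y /\ R i x y) ->
  exists f : nat -> X, f 0%nat = x0 /\ forall i, P (f i) /\ R i (f i) (f (S i)).
Proof.
  intros H0 Hstep.
  destruct (choice (fun (ix : nat * {x | P x}) (y : {x | P x}) =>
                      R (fst ix) (proj1_sig (snd ix)) (proj1_sig y))) as [F HF].
  { intros [i [x Hx]]. destruct (Hstep i x Hx) as [y [Hy HR]]. now exists (exist _ y Hy). }
  set (g := fix g (i : nat) : {x | P x} :=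
              match i with O => exist _ x0 H0 | S i => F (i, g i) end).
  exists (fun i => proj1_sig (g i)). split; [reflexivity |].
  intros i. split; [apply proj2_sig | apply (HF (i, g i))].
Qed.

Record stage := Stage { level : nat; digits : nat -> bool }.

Definition stage_ok (st : stage) : Prop := forall q, (level st < q)%nat -> digits st q = false.

Section Construction.

Variables (b : nat -> nat) (r : nat -> R).
Hypothesis b_incr : strictly_increasing b.
Hypothesis r_ge0 : forall n, 0 <= r n.
Hypothesis r_not_summable : ~ ex_series r.
Hypothesis r_dyadic_summable :
  forall V, ex_series (fun n => r n * dist_int (INR (b n) / 2 ^ V)).

Lemma divisible_weight_not_summable (V : nat) :
  ~ ex_series (fun n => if Nat.eqb (b n mod 2 ^ V) 0 then r n else 0).
Proof.
  induction V as [| V IH]; intros Hsum.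
  - apply r_not_summable. revert Hsum. apply ex_series_ext. intros n.
    now rewrite Nat.pow_0_r, Nat.mod_1_r.
  - apply IH.
    apply (ex_series_le (V := R_CompleteNormedModule) _ (fun n =>
      (if Nat.eqb (b n mod 2 ^ S V) 0 then r n else 0) + 2 * (r n * dist_int (INR (b n) / 2 ^ S V)))).
    + intros n. change (norm ?x) with (Rabs x). pose proof (r_ge0 n).
      pose proof (dist_int_ge0 (INR (b n) / 2 ^ S V)).
      destruct (Nat.eqb_spec (b n mod 2 ^ V) 0) as [HV | HV];
      destruct (Nat.eqb_spec (b n mod 2 ^ S V) 0) as [HSV | HSV];
      rewrite Rabs_right by lra; try nra.
      pose proof (dist_int_dyadic_ge (b n) V (S V) (Nat.le_succ_diag_r V) HV HSV) as Hhalf.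
      replace (S V - V)%nat with 1%nat in Hhalf by lia.
      apply (Rmult_le_compat_l (r n)) in Hhalf; [| lra].
      replace (/ 2 ^ 1) with (/ 2) in Hhalf by (simpl; field). lra.
    + apply (ex_series_plus (V := R_NormedModule)); [exact Hsum |].
      apply (ex_series_scal_l (V := R_NormedModule)). apply r_dyadic_summable.
Qed.

(* The block of stage i starts at S i only so that the blocks escape to infinity (they need not
   be disjoint), and its contribution must survive every choice of the later digits. *)
Definition stage_next (i : nat) (st st' : stage) : Prop :=
  (level st < level st')%nat /\
  (forall q, digits st' q <> digits st q -> Nat.divide (2 ^ i) q /\ (level st < q)%nat) /\
  exists B, (S i <= B)%nat /\
    forall t, (forall q, (q <= level st')%nat -> t q = digits st' q) ->
    1 <= sum_n_m (fun n => r n * dist_int (INR (b n) * dyadic t)) (S i) B.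

Lemma band_sum_upper_vacuous (A B p hi : nat) (f : nat -> R) : (1 <= A)%nat -> (b B < hi)%nat ->
  band_sum b A B p hi f = sum_n_m (fun n => if Nat.eqb (b n mod 2 ^ p) 0 then f n else 0) A B.
Proof.
  intros HA Hhi. unfold band_sum. apply sum_n_m_ext_loc. intros n Hn.
  pose proof (strictly_increasing_ge_id b b_incr n).
  pose proof (strictly_increasing_le b b_incr n B ltac:(lia)).
  pose proof (Nat.pow_gt_lin_r 2 hi ltac:(lia)).
  unfold valuation2_between. rewrite (Nat.mod_small (b n) (2 ^ hi)) by lia.
  destruct (Nat.eqb_spec (b n) 0) as [| _]; [lia |]. now rewrite Bool.andb_true_r.
Qed.

Lemma stage_step (i : nat) (st : stage) : stage_ok st ->
  exists st', stage_ok st' /\ stage_next i st st'.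
Proof.
  intros Hok. set (T := (2 ^ i)%nat). set (lo := level st). set (g := digits st).
  assert (T_pos : (0 < T)%nat) by (apply Nat.neq_0_lt_0, Nat.pow_nonzero; lia).
  assert (Hw : forall n, 0 <= if Nat.eqb (b n mod 2 ^ (lo * T)) 0 then r n else 0)
    by (intros n; destruct (Nat.eqb _ _); [apply r_ge0 | lra]).
  destruct (sum_n_m_unbounded _ Hw (divisible_weight_not_summable (lo * T)) (S i) (2 * 2 ^ S T))
    as [B [HiB Hheavy]].
  set (hi := ((lo + S (b B)) * T)%nat).
  assert (Hhi : (lo <= hi /\ lo * T < hi /\ b B < hi)%nat) by (unfold hi; nia).
  destruct (greedy_digits b r (S i) B hi T r_ge0 lo T_pos (S (b B)) g (le_n _))
    as [s [Hchg Hgreedy]].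
  fold hi in Hchg, Hgreedy. clearbody hi.
  rewrite band_sum_upper_vacuous in Hgreedy by lia.
  assert (Hgain : 2 <= band_sum b (S i) B (lo * T) hi (payoff b r hi s)).
  { apply Rle_trans with (2 := Hgreedy). pose proof (pow2_gt0 (S T)).
    apply Rle_trans with (/ 2 ^ S T * (2 * 2 ^ S T)).
    - right. field. lra.
    - apply Rmult_le_compat_l; [apply Rlt_le, Rinv_0_lt_compat; lra | exact Hheavy]. }
  assert (Hs_above : forall q, (hi < q)%nat -> s q = false).
  { intros q Hq. destruct (Bool.bool_dec (s q) (g q)) as [-> | E].
    - apply Hok. fold lo. lia.
    - destruct (Hchg q E). lia. }
  destruct (exists_pow2_ge (sum_n_m (fun n => r n * INR (b n)) (S i) B) (S hi))
    as [lo' [Hlo' Hcost]].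
  exists (Stage lo' s). unfold stage_ok, stage_next; simpl. split; [| split; [| split]].
  - intros q Hq. apply Hs_above. lia.
  - lia.
  - intros q Hq. destruct (Hchg q Hq) as [Hdiv Hrange]. split; [exact Hdiv | nia].
  - exists B. split; [exact HiB |]. intros t Ht.
    pose proof (band_payoff_le_dyadic b r (S i) B hi r_ge0 (lo * T) hi lo' s t
                  ltac:(lia) Hs_above Ht) as Hpayoff.
    pose proof (pow2_gt0 lo').
    assert (Hloss : / 2 ^ lo' * sum_n_m (fun n => r n * INR (b n)) (S i) B <= 1).
    { apply (Rmult_le_reg_l (2 ^ lo')); [lra |].
      rewrite <- Rmult_assoc, Rinv_r, Rmult_1_l, Rmult_1_r by lra. exact Hcost. }
    lra.
Qed.

Section Limit.

Variable st : nat -> stage.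
Hypothesis st_start : st 0%nat = Stage 0 (fun _ => false).
Hypothesis st_ok : forall i, stage_ok (st i).
Hypothesis st_next : forall i, stage_next i (st i) (st (S i)).

Definition limit_digits (p : nat) : bool := digits (st p) p.

Lemma level_ge (i : nat) : (i <= level (st i))%nat.
Proof. induction i as [| i IH]; [lia |]. pose proof (proj1 (st_next i)). lia. Qed.

Lemma level_mono (i j : nat) : (i <= j)%nat -> (level (st i) <= level (st j))%nat.
Proof. induction 1 as [| j _ IH]; [lia |]. pose proof (proj1 (st_next j)). lia. Qed.

Lemma digits_stable (i j q : nat) : (i <= j)%nat -> (q <= level (st i))%nat ->
  digits (st j) q = digits (st i) q.
Proof.
  intros Hij Hq. induction Hij as [| j Hij IH]; [reflexivity |]. rewrite <- IH.
  destruct (Bool.bool_dec (digits (st (S j)) q) (digits (st j) q)) as [E | E]; [exact E |].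
  destruct (proj1 (proj2 (st_next j)) q E). pose proof (level_mono i j Hij). lia.
Qed.

Lemma limit_digits_agree (i q : nat) : (q <= level (st i))%nat ->
  limit_digits q = digits (st i) q.
Proof.
  intros Hq. unfold limit_digits. destruct (Nat.le_gt_cases i q).
  - now apply digits_stable.
  - symmetry. apply digits_stable; [lia | apply level_ge].
Qed.

Lemma digits_divisible (I j p : nat) : (I <= j)%nat -> (level (st I) < p)%nat ->
  digits (st j) p = true -> Nat.divide (2 ^ I) p.
Proof.
  intros HIj Hp. induction HIj as [| j HIj IH]; intros Hd.
  - rewrite (st_ok I p Hp) in Hd. discriminate.
  - destruct (Bool.bool_dec (digits (st (S j)) p) (digits (st j) p)) as [E | E].
    + apply IH. congruence.
    + destruct (proj1 (proj2 (st_next j)) p E) as [Hdiv _].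
      apply (Nat.divide_trans _ (2 ^ j)); [| exact Hdiv].
      exists (2 ^ (j - I))%nat. rewrite <- Nat.pow_add_r. f_equal. lia.
Qed.

Lemma limit_digits_eventually_divisible : digits_eventually_divisible limit_digits.
Proof.
  intros I. exists (level (st I)). intros p Hp Hd.
  apply (digits_divisible I p p); [pose proof (level_ge I); lia | exact Hp | exact Hd].
Qed.

Lemma limit_digits_0 : limit_digits 0 = false.
Proof. unfold limit_digits. now rewrite st_start. Qed.

Lemma limit_not_summable :
  ~ ex_series (fun n => r n * dist_int (INR (b n) * dyadic limit_digits)).
Proof.
  apply not_ex_series_of_blocks. intros N.
  destruct (proj2 (proj2 (st_next N))) as [B [_ Hcontrib]].
  exists (S N), B. split; [lia |]. apply Hcontrib. apply limit_digits_agree.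
Qed.

End Limit.

Lemma exists_digits_not_summable : exists s : nat -> bool, s 0%nat = false /\
  digits_eventually_divisible s /\
  ~ ex_series (fun n => r n * dist_int (INR (b n) * dyadic s)).
Proof.
  destruct (dependent_choice_nat stage_ok stage_next (Stage 0 (fun _ => false))) as [st [H0 Hst]].
  - intros q _. reflexivity.
  - exact stage_step.
  - exists (limit_digits st). split; [| split].
    + now apply limit_digits_0.
    + apply limit_digits_eventually_divisible; intros i; apply Hst.
    + apply limit_not_summable. intros i. apply Hst.
Qed.

End Construction.

Theorem corollary3p15 (I : (nat -> Prop) -> Prop) :
  admissible_ideal I -> exists X : R -> Prop, Arbault X /\ ~ in_N_I I X.
Proof.
  intros _. exists arbault_set. split.
  - split; [intros x Hx; exact (proj1 Hx) |].
    exists arbault_seq. split; [exact arbault_seq_incr | intros x Hx; exact (proj2 Hx)].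
  - intros [_ [a [r [Ha [Hr [_ [Hdivergent [_ Hsum]]]]]]]].
    destruct (exists_digits_not_summable a r Ha (fun n => Rlt_le _ _ (Hr n)) Hdivergent
                (fun V => Hsum _ (inv_pow2_in_arbault_set V))) as [s [Hs0 [Hsparse Hnot]]].
    exact (Hnot (Hsum _ (dyadic_in_arbault_set s Hs0 Hsparse))).
Qed.
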